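(* Let $n$ be even and let $N$ be a $5$-net of order $n$ with parallel classes $\Pi_0,\dots,\Pi_4$ and a relation $\mathcal R$ of type $(\lambda_0,\dots,\lambda_4)$. Put $g_i=\frac n2-\lambda_i$. Then for every $\mathbf b=(b_0,\dots,b_4)\in\{0,1\}^5$ with an even number of ones, $$t_{\mathbf b}=\frac1{16}n^2+\frac18 n\sum_{i=0}^{4}(-1)^{b_i}g_i+\frac14\sum_{0\le i<j\le 4}(-1)^{b_i+b_j}g_ig_j .$$
   Context: A $k$-net of order $n$ is a set $P$ of $n^2$ points together with a set $L$ of $kn$ lines (subsets of $P$), each line containing $n$ points and each point lying on $k$ lines, such that $L$ partitions into $k$ parallel classes $\Pi_0,\dots,\Pi_{k-1}$ of $n$ pairwise disjoint lines each, and any two lines from different parallel classes meet in exactly one point. A relation on a net is a set $\mathcal R\subseteq L$ such that every point lies on an even number of lines of $\mathcal R$. Its type is $(\lambda_0,\dots,\lambda_{k-1})$ with $\lambda_i=|\mathcal R\cap\Pi_i|$. The type of a point $p$ is the binary string $\mathbf b\in\{0,1\}^k$ with $b_i=1$ iff the line of $\Pi_i$ through $p$ lies in $\mathcal R$; $t_{\mathbf b}$ is the number of points of type $\mathbf b$. *)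

From mathcomp Require Import all_boot all_order all_algebra.
Set Implicit Arguments. Unset Strict Implicit. Unset Printing Implicit Defensive.
Import GRing.Theory Num.Theory.

(* A k-net of order n: points = the finite type P, lines = the set L of
   subsets of P, and cls assigns to each line its parallel class (0..k-1). *)
Definition is_net (k n : nat) (P : finType) (L : {set {set P}})
    (cls : {set P} -> 'I_k) : Prop :=
  [/\ #|P| = n ^ 2,
      #|L| = k * n,
      (forall l, l \in L -> #|l| = n),
      (forall p : P, #|[set l in L | p \in l]| = k) &
      (forall i : 'I_k, #|[set l in L | cls l == i]| = n)] /\
  [/\
      (forall l1 l2, l1 \in L -> l2 \in L -> cls l1 = cls l2 -> l1 != l2 ->
          [disjoint l1 & l2])
    & (forall l1 l2, l1 \in L -> l2 \in L -> cls l1 != cls l2 ->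
          #|l1 :&: l2| = 1)].

Definition is_relation (P : finType) (L R : {set {set P}}) : Prop :=
  R \subset L /\ (forall p : P, ~~ odd #|[set l in R | p \in l]|).

Definition rel_type k (P : finType) (R : {set {set P}}) (cls : {set P} -> 'I_k)
    (i : 'I_k) : nat := #|[set l in R | cls l == i]|.

Definition point_type k (P : finType) (L R : {set {set P}})
    (cls : {set P} -> 'I_k) (p : P) (i : 'I_k) : bool :=
  [exists l in L, [&& cls l == i, p \in l & l \in R]].

Definition t_count k (P : finType) (L R : {set {set P}})
    (cls : {set P} -> 'I_k) (b : 'I_k -> bool) : nat :=
  #|[set p : P | [forall i, point_type L R cls p i == b i]]|.

From mathcomp Require Import all_boot all_order all_algebra.
From mathcomp Require Import ring.
(* Write s_i(p) = (-1)^(b_i(p)). A point lies on an even number of lines of the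
   relation, so its type has even weight; on even words of length 5 the characters
   of weight k and 5 - k agree, so the indicator of the word b is
   (1 + sum_i (-1)^b_i s_i + sum_{i<j} (-1)^(b_i+b_j) s_i s_j) / 16.
   Summing over the points, sum_p s_i(p) = n (n - 2 lambda_i) since each line
   carries n points, and sum_p s_i(p) s_j(p) = (n - 2 lambda_i)(n - 2 lambda_j)
   for i <> j since lines of different classes meet in exactly one point. *)

Set Implicit Arguments. Unset Strict Implicit. Unset Printing Implicit Defensive.
Import GRing.Theory Num.Theory.

Section NetSums.

Variables (k n : nat) (P : finType) (L R : {set {set P}}) (cls : {set P} -> 'I_k).
Hypothesis RL : R \subset L.
Hypothesis parallel_disjoint : forall l1 l2, l1 \in L -> l2 \in L ->
  cls l1 = cls l2 -> l1 != l2 -> [disjoint l1 & l2].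
Hypothesis transversal_meet : forall l1 l2, l1 \in L -> l2 \in L ->
  cls l1 != cls l2 -> #|l1 :&: l2| = 1.
Hypothesis card_line : forall l, l \in L -> #|l| = n.

Local Notation u := (point_type L R cls).
Local Notation lambda := (rel_type R cls).

Lemma sum_mem (l : {set P}) : \sum_(p : P) (p \in l : nat) = #|l|.
Proof. by rewrite -sum1_card [RHS]big_mkcond; apply: eq_bigr => p _; case: (p \in l). Qed.

Lemma sum1_rel_type i : \sum_(l in R | cls l == i) 1 = lambda i.
Proof. by rewrite sum1_card; apply: eq_card => l; rewrite inE. Qed.

Lemma point_type_sum p i : (u p i : nat) = \sum_(l in R | cls l == i) (p \in l : nat).
Proof.
have [/existsP[l /andP[lL /and3P[/eqP li pl lR]]] | upi] := boolP (u p i).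
  rewrite (bigD1 l) /=; last by rewrite lR li eqxx.
  rewrite pl big1 // => m /andP[/andP[mR /eqP mi] ml].
  have lm : [disjoint l & m].
    by apply: parallel_disjoint; rewrite ?(subsetP RL) // ?li ?mi // eq_sym.
  by rewrite (disjointFr lm pl).
apply/esym/big1 => m /andP[mR mi]; case pm: (p \in m) => //.
by case/negP: upi; apply/existsP; exists m; rewrite (subsetP RL) // mi pm mR.
Qed.

Lemma sum_point_type_over_classes p :
  \sum_(i < k) (u p i : nat) = #|[set l in R | p \in l]|.
Proof.
under eq_bigr do rewrite point_type_sum.
rewrite -(partition_big cls xpredT) // -sum1_card big_mkcond [RHS]big_mkcond /=.
by apply: eq_bigr => l _; rewrite inE; case: (l \in R); case: (p \in l).
Qed.

Lemma sum_point_type_over_points i : \sum_(p : P) (u p i : nat) = lambda i * n.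
Proof.
under eq_bigr do rewrite point_type_sum.
rewrite exchange_big /= -sum1_rel_type big_distrl /=.
by apply: eq_bigr => l /andP[lR _]; rewrite sum_mem card_line ?mul1n ?(subsetP RL).
Qed.

Lemma sum_point_type_mul_over_points i j : i != j ->
  \sum_(p : P) (u p i * u p j) = lambda i * lambda j.
Proof.
move=> ij; under eq_bigr do rewrite !point_type_sum big_distrl /=.
rewrite exchange_big /= -sum1_rel_type big_distrl /=.
apply: eq_bigr => l /andP[lR /eqP li]; rewrite -sum1_rel_type mul1n.
under eq_bigr do rewrite big_distrr /=.
rewrite exchange_big /=; apply: eq_bigr => m /andP[mR /eqP mj].
rewrite -(transversal_meet (subsetP RL l lR) (subsetP RL m mR)); last by rewrite li mj.
by rewrite -sum_mem; apply: eq_bigr => p _; rewrite inE; case: (p \in l); case: (p \in m).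
Qed.

Hypothesis card_points : #|P| = (n ^ 2)%N.

Local Open Scope ring_scope.

Lemma sum_sign_point_type (A : comRingType) i :
  \sum_(p : P) (-1) ^+ u p i = n%:R * (n%:R - 2 * (lambda i)%:R) :> A.
Proof.
under eq_bigr do rewrite signrE -mul2n natrM.
rewrite sumrB sumr_const card_points -mulr_sumr -natr_sum sum_point_type_over_points.
by rewrite natrM natrX; ring.
Qed.

Lemma sum_sign_point_type_mul (A : comRingType) i j : i != j ->
  \sum_(p : P) (-1) ^+ u p i * (-1) ^+ u p j =
    (n%:R - 2 * (lambda i)%:R) * (n%:R - 2 * (lambda j)%:R) :> A.
Proof.
move=> ij.
have expand p : (-1) ^+ u p i * (-1) ^+ u p j =
    1 - 2 * (u p i : nat)%:R - 2 * (u p j : nat)%:R + 4 * (u p i * u p j)%:R :> A.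
  by rewrite !signrE -!mul2n !natrM; ring.
under eq_bigr do rewrite expand.
rewrite !big_split /= !sumrN sumr_const card_points -!mulr_sumr -!natr_sum.
by rewrite !sum_point_type_over_points sum_point_type_mul_over_points // !natrM; ring.
Qed.

End NetSums.

Lemma odd_sum_addb (I : finType) (x y : I -> bool) :
  odd (\sum_i (x i (+) y i : nat)) = odd (\sum_i (x i : nat)) (+) odd (\sum_i (y i : nat)).
Proof.
rewrite !(big_morph odd oddD (erefl : odd 0 = false)) -big_split /=.
by apply: eq_bigr => i _; rewrite !oddb.
Qed.

Local Open Scope ring_scope.

Lemma indicator_even_weight5 (A : comRingType) (x : 'I_5 -> bool) :
  ~~ odd (\sum_(i < 5) (x i : nat)) ->
  16 * ([forall i, ~~ x i] : nat)%:R =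
    1 + \sum_(i < 5) (-1) ^+ x i
      + \sum_(i < 5) \sum_(j < 5 | (i < j)%N) (-1) ^+ x i * (-1) ^+ x j :> A.
Proof.
have -> : [forall i, ~~ x i] = (\sum_(i < 5) (x i : nat) == 0)%N.
  by rewrite sum_nat_eq0; apply: eq_forallb => i; case: (x i).
rewrite !big_ord_recl !big_ord0 !(big_mkcond (fun j => (_ < nat_of_ord j)%N)) /=.
rewrite !big_ord_recl !big_ord0 /=.
move: (x _) (x _) (x _) (x _) (x _) => [] [] [] [] [] //= _; ring.
Qed.

Lemma t_count_mul16 (A : comRingType) (n : nat) (P : finType) (L R : {set {set P}})
    (cls : {set P} -> 'I_5) (b : 'I_5 -> bool) :
  is_net n L cls -> is_relation L R -> ~~ odd (\sum_(i < 5) (b i : nat)) ->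
  let h i := n%:R - 2 * (rel_type R cls i)%:R : A in
  16 * (t_count L R cls b)%:R =
    n%:R ^+ 2 + n%:R * \sum_(i < 5) (-1) ^+ b i * h i
    + \sum_(i < 5) \sum_(j < 5 | (i < j)%N) (-1) ^+ (b i + b j) * h i * h j.
Proof.
move=> [[cardP _ card_line _ _] [disj meet]] [RL R_even] b_even h.
set u := point_type L R cls.
have u_even p : ~~ odd (\sum_(i < 5) (u p i (+) b i : nat)).
  by rewrite odd_sum_addb sum_point_type_over_classes // (negbTE (R_even p)) (negbTE b_even).
have t_countE : t_count L R cls b = \sum_p ([forall i, ~~ (u p i (+) b i)] : nat).
  rewrite /t_count -sum1_card big_mkcond; apply: eq_bigr => p _; rewrite inE.
  rewrite (eq_forallb (P2 := fun i => ~~ (u p i (+) b i))) // => i.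
  by rewrite /u; case: (point_type _ _ _ p i); case: (b i).
rewrite t_countE natr_sum mulr_sumr.
under eq_bigr do rewrite indicator_even_weight5 //.
rewrite !big_split /= sumr_const cardP natrX.
congr (_ + _ + _).
  rewrite exchange_big mulr_sumr; apply: eq_bigr => i _.
  under eq_bigr do rewrite signr_addb mulrC.
  rewrite -mulr_sumr (sum_sign_point_type RL disj card_line cardP) /h; ring.
rewrite exchange_big; apply: eq_bigr => i _; rewrite exchange_big; apply: eq_bigr => j ij.
have {}ij : i != j by rewrite neq_ltn ij.
have sign_split p : (-1) ^+ (u p i (+) b i) * (-1) ^+ (u p j (+) b j) =
    (-1) ^+ (b i + b j) * ((-1) ^+ u p i * (-1) ^+ u p j) :> A.
  by rewrite !signr_addb exprD mulrACA mulrC.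
under eq_bigr do rewrite sign_split.
rewrite -mulr_sumr (sum_sign_point_type_mul RL disj meet card_line cardP _ ij) /h.
by rewrite mulrA.
Qed.

Theorem mainTheorem2 (n : nat) (P : finType) (L R : {set {set P}})
    (cls : {set P} -> 'I_5) (b : 'I_5 -> bool) :
  ~~ odd n ->
  is_net n L cls ->
  is_relation L R ->
  ~~ odd (\sum_(i < 5) (b i : nat))%N ->
  let g := fun i : 'I_5 => (n%:R / 2 - (rel_type R cls i)%:R : rat) in
  (t_count L R cls b)%:R =
    (n%:R ^+ 2) / 16
    + n%:R / 8 * \sum_(i < 5) (-1) ^+ b i * g i
    + 1 / 4 * \sum_(i < 5) \sum_(j < 5 | (i < j)%N)
                 (-1) ^+ (b i + b j)%N * g i * g j.
Proof.
move=> _ net rel b_even g; apply: (@mulfI _ 16) => //.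
rewrite (t_count_mul16 _ net rel b_even) /=.
have h_g i : n%:R - 2 * (rel_type R cls i)%:R = 2 * g i by rewrite /g; field.
have lin : \sum_(i < 5) (-1) ^+ b i * (n%:R - 2 * (rel_type R cls i)%:R) =
    2 * \sum_(i < 5) (-1) ^+ b i * g i.
  by rewrite mulr_sumr; apply: eq_bigr => i _; rewrite h_g mulrCA.
have quad : \sum_(i < 5) \sum_(j < 5 | (i < j)%N) (-1) ^+ (b i + b j) *
      (n%:R - 2 * (rel_type R cls i)%:R) * (n%:R - 2 * (rel_type R cls j)%:R) =
    4 * \sum_(i < 5) \sum_(j < 5 | (i < j)%N) (-1) ^+ (b i + b j) * g i * g j.
  rewrite mulr_sumr; apply: eq_bigr => i _; rewrite mulr_sumr; apply: eq_bigr => j _.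
  by rewrite !h_g; ring.
by rewrite lin quad; field.
Qed.
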